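(* Let $s$ be a state, let $B$ be a formula of $\mathcal L_{class}$ with at most the free variable $x$, and let $t_1,t_2,u_1,u_2$ be closed terms of $\mathcal T_{class}$ (with $u_1,u_2$ of the type of $x$ and $t_j$ of type $|B[u_j/x]|$). If $t_1[s]=t_2[s]$ and $u_1[s]=u_2[s]$, then $t_1\Vvdash_s B[u_1/x]$ if and only if $t_2\Vvdash_s B[u_2/x]$.
   Context: Updates: an update is a finite set $U$ of triples of natural numbers forming the graph of a partial function $\mathbb N^2\to\mathbb N$. System $\mathcal T$ is Gödel's System T (types $\mathsf N,\mathsf{Bool}$, $\sigma\to\tau$, $\sigma\times\tau$; pairs $\langle\cdot,\cdot\rangle$, projections $\pi_0,\pi_1$; constants $0,\mathsf S,\mathsf{True},\mathsf{False},\mathsf{if}_\tau,\mathsf{rec}_\tau$ with the usual reductions) extended with a base type $\mathsf U$, a constant $\overline U:\mathsf U$ for each update $U$ ($\varnothing$ denotes $\overline{\emptyset}$), and constants $\min,\mathsf{get},\mathsf{mkupd},\cup$ computing respectively the least first component of a triple of an update (0 if empty), the value of an update at a pair (with a default), the singleton update $\{(a,n,m)\}$, and the consistent union ($U_1\cup U_2$ minus the triples of $U_2$ inconsistent with some triple of $U_1$). Terms of $\mathcal T$ are strongly normalizing with unique normal forms; for terms $t_1,t_2$ of $\mathcal T$, $t_1=t_2$ means they have the same normal form; closed normal terms of type $\mathsf N,\mathsf{Bool},\mathsf U$ are numerals, booleans, update constants. $\mathcal T_{class}$ is $\mathcal T$ plus countably many constants $\Phi_0,\Phi_1,\dots:\mathsf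 N\to\mathsf N$ without reduction rules. A state is a closed term $s:\mathsf N\to\mathsf N\to\mathsf N$ of $\mathcal T$; $s_i:=s(i)$; for $t\in\mathcal T_{class}$, $t[s]$ is obtained by replacing each $\Phi_i$ by $s_i$. Formulas of $\mathcal L_{class}$: atomic formulas are terms of $\mathcal T_{class}$ of type $\mathsf{Bool}$; formulas are built with $\land,\lor,\rightarrow,\mathbin{-}$ (co-implication, ''$A$ and not $B$''), $\forall x^\tau,\exists x^\tau$. A formula is arithmetical if it contains no $\Phi_i$, its quantifiers range over $\mathsf N$ and its atoms are terms of $\mathcal T$. Involutive negation: an atom is positive if it is $\neg_{\mathsf{Bool}}\cdots\neg_{\mathsf{Bool}}Q$ with an even number of negations and $Q$ not a negation; $P^\bot=\neg_{\mathsf{Bool}}P$ and $(\neg_{\mathsf{Bool}}P)^\bot=P$ for positive $P$; $(A\land B)^\bot=A^\bot\lor B^\bot$, $(A\lor B)^\bot=A^\bot\land B^\bot$, $(A\to B)^\bot=A\mathbin{-}B$, $(A\mathbin{-}B)^\bot=A\to B$, $(\forall xA)^\bot=\exists xA^\bot$, $(\exists xA)^\bot=\forall xA^\bot$. $\langle\vec x\rangle$ is a term of $\mathcal T$ coding an injection $\mathbb N^k\to\mathbb N$, bijective on numerals. Each arithmetical $A(\vec x,y)$ has exactly one associated Skolem constant $\Phi_A$ (distinct formulas, distinct constants). Truth value: for arithmetical $F$ with free variables $\vec x$, a term $\llbracket F\rrbracket:\mathsf{Bool}$ of $\mathcal T_{class}$: $\llbracket P\rrbracket=P$; $\llbracket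 A\lor B\rrbracket=\llbracket A\rrbracket\lor_{\mathsf{Bool}}\llbracket B\rrbracket$; $\llbracket A\land B\rrbracket=\llbracket A\rrbracket\land_{\mathsf{Bool}}\llbracket B\rrbracket$; $\llbracket A\to B\rrbracket=\llbracket A\rrbracket\Rightarrow_{\mathsf{Bool}}\llbracket B\rrbracket$; $\llbracket A\mathbin{-}B\rrbracket=\llbracket A\rrbracket\land_{\mathsf{Bool}}\llbracket B^\bot\rrbracket$; $\llbracket \exists y A\rrbracket=\llbracket A\rrbracket[\Phi_A\langle\vec x\rangle/y]$; $\llbracket \forall y A\rrbracket=\llbracket A\rrbracket[\Phi_{A^\bot}\langle\vec x\rangle/y]$. $\llbracket F\rrbracket_s:=\llbracket F\rrbracket[s]$. $\Gamma$ is a fixed arbitrary finite set of arithmetical formulas. Types of realizers: $|P|=\mathsf U$ for atomic $P$, $|A\land B|=|A|\times|B|$, $|A\lor B|=\mathsf{Bool}\times(|A|\times|B|)$, $|A\to B|=|A|\to|B|$, $|A\mathbin{-}B|=|A|\times|B^\bot|$, $|\forall x^\tau A|=\tau\to|A|$, $|\exists x^\tau A|=\tau\times|A|$. Let $p_0=\pi_0$, $p_1=\pi_0\pi_1$, $p_2=\pi_1\pi_1$. For a state $s$, closed $t\in\mathcal T_{class}$ and closed $F$ with $t:|F|$, $t\Vvdash_s F$ is defined by: (atomic $Q$) if $t[s]=\overline U$ then every $(i,\langle\vec n\rangle,m)\in U$ has $\Phi_i=\Phi_A$ for some $A\in\Gamma$ with $\llbracket A\rrbracket_s(\vec n,s_i\langle\vec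 n\rangle)=\mathsf{False}$ and $\llbracket A\rrbracket_s(\vec n,m)=\mathsf{True}$, and $t[s]=\varnothing$ implies $Q[s]=\mathsf{True}$; $t\Vvdash_s A\land B$ iff $\pi_0t\Vvdash_sA$ and $\pi_1t\Vvdash_sB$; $t\Vvdash_sA\lor B$ iff either $p_0t[s]=\mathsf{True}$ and $p_1t\Vvdash_sA$, or $p_0t[s]=\mathsf{False}$ and $p_2t\Vvdash_sB$; $t\Vvdash_sA\to B$ iff for all $u$, $u\Vvdash_sA$ implies $tu\Vvdash_sB$; $t\Vvdash_sA\mathbin{-}B$ iff $\pi_0t\Vvdash_sA$ and $\pi_1t\Vvdash_sB^\bot$; $t\Vvdash_s\forall x^\tau A$ iff $tu\Vvdash_sA[u/x]$ for all closed $u:\tau$ of $\mathcal T$; $t\Vvdash_s\exists x^\tau A$ iff for some closed $u:\tau$ of $\mathcal T$, $\pi_0t[s]=u$ and $\pi_1t\Vvdash_sA[u/x]$. *)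

From HB Require Import structures.
From mathcomp Require Import all_boot finmap.
From Stdlib Require List.

Set Implicit Arguments.
Unset Strict Implicit.
Unset Printing Implicit Defensive.

Local Open Scope fset_scope.

(* Updates: finite sets of triples ((a,n),m) that are the graph of a   *)
(* partial function N^2 -> N.                                           *)

Definition triple := ((nat * nat) * nat)%type.

Definition functionalb (U : {fset triple}) : bool :=
  all (fun x : triple => all (fun y : triple => (x.1 == y.1) ==> (x.2 == y.2))
                             (enum_fset U))
      (enum_fset U).

Definition update := {U : {fset triple} | functionalb U}.

Definition umin (U : {fset triple}) : nat :=
  match [seq x.1.1 | x <- enum_fset U] with
  | [::] => 0
  | a :: l => foldr minn a l
  end.

Definition uget (U : {fset triple}) (a n d : nat) : nat :=
  head d [seq x.2 | x <- enum_fset U & x.1 == (a, n)].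

Definition ucup (U1 U2 : {fset triple}) : {fset triple} :=
  U1 `|` [fset y in U2 | all (fun x : triple => (x.1 == y.1) ==> (x.2 == y.2))
                              (enum_fset U1)].

(* System T extended with updates (T), and T_class (constants Phi_i).  *)

Inductive ty : Type :=
| TN | TBool | TU
| TArr (a b : ty)
| TProd (a b : ty).

Inductive term : Type :=
| Var (n : nat)
| App (t u : term)
| Lam (a : ty) (t : term)
| Pair (t u : term)
| Pi0 (t : term)
| Pi1 (t : term)
| Zero
| Succ
| TrueC | FalseC
| IfC (a : ty)
| RecC (a : ty)
| UpdC (U : update)
| MinC
| GetC
| MkupdC
| CupC
| Phi (i : nat).

Fixpoint num (k : nat) : term :=
  match k with 0 => Zero | k'.+1 => App Succ (num k') end.

Fixpoint isT (t : term) : bool :=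
  match t with
  | App a b | Pair a b => isT a && isT b
  | Lam _ b | Pi0 b | Pi1 b => isT b
  | Phi _ => false
  | _ => true
  end.

Fixpoint lift (d c : nat) (t : term) : term :=
  match t with
  | Var n => if c <= n then Var (n + d) else Var n
  | App a b => App (lift d c a) (lift d c b)
  | Lam T b => Lam T (lift d c.+1 b)
  | Pair a b => Pair (lift d c a) (lift d c b)
  | Pi0 b => Pi0 (lift d c b)
  | Pi1 b => Pi1 (lift d c b)
  | _ => t
  end.

Fixpoint subst (k : nat) (u t : term) : term :=
  match t with
  | Var n => if n < k then Var n else if n == k then lift k 0 u else Var n.-1
  | App a b => App (subst k u a) (subst k u b)
  | Lam T b => Lam T (subst k.+1 u b)
  | Pair a b => Pair (subst k u a) (subst k u b)
  | Pi0 b => Pi0 (subst k u b)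
  | Pi1 b => Pi1 (subst k u b)
  | _ => t
  end.

(* simultaneous substitution of closed terms us for variables 0,1,... *)
Fixpoint substs (us : seq term) (t : term) : term :=
  match us with [::] => t | u :: us' => substs us' (subst 0 u t) end.

Inductive has_type (G : seq ty) : term -> ty -> Prop :=
| hty_var n : n < size G -> has_type G (Var n) (nth TN G n)
| hty_app t u a b : has_type G t (TArr a b) -> has_type G u a -> has_type G (App t u) b
| hty_lam t a b : has_type (a :: G) t b -> has_type G (Lam a t) (TArr a b)
| hty_pair t u a b : has_type G t a -> has_type G u b -> has_type G (Pair t u) (TProd a b)
| hty_pi0 t a b : has_type G t (TProd a b) -> has_type G (Pi0 t) a
| hty_pi1 t a b : has_type G t (TProd a b) -> has_type G (Pi1 t) b
| hty_zero : has_type G Zero TN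
| hty_succ : has_type G Succ (TArr TN TN)
| hty_true : has_type G TrueC TBool
| hty_false : has_type G FalseC TBool
| hty_if a : has_type G (IfC a) (TArr TBool (TArr a (TArr a a)))
| hty_rec a : has_type G (RecC a) (TArr a (TArr (TArr TN (TArr a a)) (TArr TN a)))
| hty_upd U : has_type G (UpdC U) TU
| hty_min : has_type G MinC (TArr TU TN)
| hty_get : has_type G GetC (TArr TU (TArr TN (TArr TN (TArr TN TN))))
| hty_mkupd : has_type G MkupdC (TArr TN (TArr TN (TArr TN TU)))
| hty_cup : has_type G CupC (TArr TU (TArr TU TU))
| hty_phi i : has_type G (Phi i) (TArr TN TN).

Inductive red1 : term -> term -> Prop :=
| r_beta a t u : red1 (App (Lam a t) u) (subst 0 u t)
| r_pi0 t u : red1 (Pi0 (Pair t u)) t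
| r_pi1 t u : red1 (Pi1 (Pair t u)) u
| r_ift a t u : red1 (App (App (App (IfC a) TrueC) t) u) t
| r_iff a t u : red1 (App (App (App (IfC a) FalseC) t) u) u
| r_rec0 a t f : red1 (App (App (App (RecC a) t) f) Zero) t
| r_recS a t f n :
    red1 (App (App (App (RecC a) t) f) (App Succ n))
         (App (App f n) (App (App (App (RecC a) t) f) n))
| r_min U : red1 (App MinC (UpdC U)) (num (umin (sval U)))
| r_get U a n d :
    red1 (App (App (App (App GetC (UpdC U)) (num a)) (num n)) (num d))
         (num (uget (sval U) a n d))
| r_mkupd a n m V : sval V = [fset ((a, n), m)] ->
    red1 (App (App (App MkupdC (num a)) (num n)) (num m)) (UpdC V)
| r_cup U1 U2 V : sval V = ucup (sval U1) (sval U2) ->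
    red1 (App (App CupC (UpdC U1)) (UpdC U2)) (UpdC V)
| r_appl t t' u : red1 t t' -> red1 (App t u) (App t' u)
| r_appr t u u' : red1 u u' -> red1 (App t u) (App t u')
| r_lam a t t' : red1 t t' -> red1 (Lam a t) (Lam a t')
| r_pairl t t' u : red1 t t' -> red1 (Pair t u) (Pair t' u)
| r_pairr t u u' : red1 u u' -> red1 (Pair t u) (Pair t u')
| r_pi0c t t' : red1 t t' -> red1 (Pi0 t) (Pi0 t')
| r_pi1c t t' : red1 t t' -> red1 (Pi1 t) (Pi1 t').

Inductive reds : term -> term -> Prop :=
| reds_refl t : reds t t
| reds_step t t' t'' : red1 t t' -> reds t' t'' -> reds t t''.

Definition normal (t : term) : Prop := forall t', ~ red1 t t'.

Definition teq (t1 t2 : term) : Prop :=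
  exists n, reds t1 n /\ reds t2 n /\ normal n.

Definition is_state (s : term) : Prop :=
  has_type [::] s (TArr TN (TArr TN TN)) /\ isT s.

Fixpoint tsub (s t : term) : term :=
  match t with
  | Phi i => App s (num i)
  | App a b => App (tsub s a) (tsub s b)
  | Lam T b => Lam T (tsub s b)
  | Pair a b => Pair (tsub s a) (tsub s b)
  | Pi0 b => Pi0 (tsub s b)
  | Pi1 b => Pi1 (tsub s b)
  | _ => t
  end.

Definition notB : term := Lam TBool (App (App (App (IfC TBool) (Var 0)) FalseC) TrueC).
Definition andB (a b : term) : term := App (App (App (IfC TBool) a) b) FalseC.
Definition orB (a b : term) : term := App (App (App (IfC TBool) a) TrueC) b.
Definition impB (a b : term) : term := App (App (App (IfC TBool) a) b) TrueC.

Fixpoint negs (P : term) : nat :=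
  match P with
  | App (Lam TBool (App (App (App (IfC TBool) (Var 0)) FalseC) TrueC)) Q => (negs Q).+1
  | _ => 0
  end.

Inductive formula : Type :=
| FAtom (P : term)
| FAnd (A B : formula)
| FOr (A B : formula)
| FImp (A B : formula)
| FCoimp (A B : formula)
| FAll (a : ty) (A : formula)
| FEx (a : ty) (A : formula).

Fixpoint fsize (F : formula) : nat :=
  match F with
  | FAtom _ => 1
  | FAnd A B | FOr A B | FImp A B | FCoimp A B => (fsize A + fsize B).+1
  | FAll _ A | FEx _ A => (fsize A).+1
  end.

Fixpoint fwf (G : seq ty) (F : formula) : Prop :=
  match F with
  | FAtom P => has_type G P TBool
  | FAnd A B | FOr A B | FImp A B | FCoimp A B => fwf G A /\ fwf G B
  | FAll a A | FEx a A => fwf (a :: G) A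
  end.

Fixpoint fsubst (k : nat) (u : term) (F : formula) : formula :=
  match F with
  | FAtom P => FAtom (subst k u P)
  | FAnd A B => FAnd (fsubst k u A) (fsubst k u B)
  | FOr A B => FOr (fsubst k u A) (fsubst k u B)
  | FImp A B => FImp (fsubst k u A) (fsubst k u B)
  | FCoimp A B => FCoimp (fsubst k u A) (fsubst k u B)
  | FAll a A => FAll a (fsubst k.+1 u A)
  | FEx a A => FEx a (fsubst k.+1 u A)
  end.

Fixpoint arith (F : formula) : bool :=
  match F with
  | FAtom P => isT P
  | FAnd A B | FOr A B | FImp A B | FCoimp A B => arith A && arith B
  | FAll TN A | FEx TN A => arith A
  | _ => false
  end.

Definition perp_atom (P : term) : term :=
  if odd (negs P) then (match P with App _ Q => Q | _ => P end) else App notB P.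

Fixpoint perp (F : formula) : formula :=
  match F with
  | FAtom P => FAtom (perp_atom P)
  | FAnd A B => FOr (perp A) (perp B)
  | FOr A B => FAnd (perp A) (perp B)
  | FImp A B => FCoimp A B
  | FCoimp A B => FImp A B
  | FAll a A => FEx a (perp A)
  | FEx a A => FAll a (perp A)
  end.

(*  sk n A : index i of the Skolem constant Phi_A = Phi_i of the       *)
(*           arithmetical formula A(x_1..x_n, y) (A in a context of    *)
(*           n+1 variables, y = Var 0, x_j = Var j)                     *)
(*  code k : the term <x_1..x_k> of T, in a context of k variables     *)

Definition skolem_ok (sk : nat -> formula -> nat) : Prop :=
  forall n1 A1 n2 A2, arith A1 -> arith A2 ->
    sk n1 A1 = sk n2 A2 -> n1 = n2 /\ A1 = A2.

Definition code_ok (code : nat -> term) : Prop :=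
  forall k,
    has_type (nseq k TN) (code k) TN /\ isT (code k) /\
    (forall ns, size ns = k -> exists c, teq (substs (map num ns) (code k)) (num c)) /\
    (forall ns1 ns2 c, size ns1 = k -> size ns2 = k ->
       teq (substs (map num ns1) (code k)) (num c) ->
       teq (substs (map num ns2) (code k)) (num c) -> ns1 = ns2) /\
    (0 < k -> forall c, exists ns, size ns = k /\
       teq (substs (map num ns) (code k)) (num c)).

Section Semantics.
Variables (sk : nat -> formula -> nat) (code : nat -> term).

(* truth value [[F]] of an arithmetical formula F in a context of n
   variables (fuel k >= fsize F) *)
Fixpoint truth_f (k n : nat) (F : formula) : term :=
  match k with
  | 0 => FalseC
  | k'.+1 =>
    match F with
    | FAtom P => P
    | FAnd A B => andB (truth_f k' n A) (truth_f k' n B)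
    | FOr A B => orB (truth_f k' n A) (truth_f k' n B)
    | FImp A B => impB (truth_f k' n A) (truth_f k' n B)
    | FCoimp A B => andB (truth_f k' n A) (truth_f k' n (perp B))
    | FEx _ A => subst 0 (App (Phi (sk n A)) (code n)) (truth_f k' n.+1 A)
    | FAll _ A => subst 0 (App (Phi (sk n (perp A))) (code n)) (truth_f k' n.+1 A)
    end
  end.

Definition truth (n : nat) (F : formula) : term := truth_f (fsize F) n F.

Definition truth_at (s : term) (n : nat) (A : formula) (ns : seq nat) (y : term) : term :=
  tsub s (substs (y :: map num ns) (truth n.+1 A)).

Fixpoint rtype_f (k : nat) (F : formula) : ty :=
  match k with
  | 0 => TU
  | k'.+1 =>
    match F with
    | FAtom _ => TU
    | FAnd A B => TProd (rtype_f k' A) (rtype_f k' B)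
    | FOr A B => TProd TBool (TProd (rtype_f k' A) (rtype_f k' B))
    | FImp A B => TArr (rtype_f k' A) (rtype_f k' B)
    | FCoimp A B => TProd (rtype_f k' A) (rtype_f k' (perp B))
    | FAll a A => TArr a (rtype_f k' A)
    | FEx a A => TProd a (rtype_f k' A)
    end
  end.

Definition rtype (F : formula) : ty := rtype_f (fsize F) F.

Variable (Gam : seq (nat * formula)).

Fixpoint real_f (k : nat) (s t : term) (F : formula) : Prop :=
  match k with
  | 0 => False
  | k'.+1 =>
    match F with
    | FAtom Q =>
        (forall U : update, teq (tsub s t) (UpdC U) ->
           forall i c m, ((i, c), m) \in sval U ->
           exists n A ns,
             List.In (n, A) Gam /\ i = sk n A /\ size ns = n /\
             teq (substs (map num ns) (code n)) (num c) /\
             teq (truth_at s n A ns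
                    (App (App s (num i)) (substs (map num ns) (code n)))) FalseC /\
             teq (truth_at s n A ns (num m)) TrueC) /\
        (forall U : update, teq (tsub s t) (UpdC U) -> sval U = fset0 ->
           teq (tsub s Q) TrueC)
    | FAnd A B => real_f k' s (Pi0 t) A /\ real_f k' s (Pi1 t) B
    | FOr A B =>
        (teq (tsub s (Pi0 t)) TrueC /\ real_f k' s (Pi0 (Pi1 t)) A) \/
        (teq (tsub s (Pi0 t)) FalseC /\ real_f k' s (Pi1 (Pi1 t)) B)
    | FImp A B =>
        forall u, has_type [::] u (rtype A) ->
          real_f k' s u A -> real_f k' s (App t u) B
    | FCoimp A B => real_f k' s (Pi0 t) A /\ real_f k' s (Pi1 t) (perp B)
    | FAll a A =>
        forall u, has_type [::] u a -> isT u -> real_f k' s (App t u) (fsubst 0 u A)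
    | FEx a A =>
        exists u, has_type [::] u a /\ isT u /\
          teq (tsub s (Pi0 t)) u /\ real_f k' s (Pi1 t) (fsubst 0 u A)
    end
  end.

Definition realizes (s t : term) (F : formula) : Prop := real_f (fsize F) s t F.

End Semantics.

(* Realizability [t ||-_s F] inspects [t] only through the normal forms of
   terms built from [t[s]] (update constants, booleans, closed witnesses),
   and inspects [F] only through the boolean values its atoms take after
   [s].  Since normal forms are unique (confluence, proved with parallel
   reduction and complete developments), realizers with joinable images
   under [s] are interchangeable.  Substituting [u1] or [u2] with joinable
   images for [x] yields formulas of the same shape whose atoms take the
   same boolean values under every closing instantiation by joinable
   values; this relation is stable under substitution and involutive
   negation, which is what the induction on formulas needs. *)

From Pilot Require Import Defs.
From HB Require Import structures.
From mathcomp Require Import all_boot finmap zify.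
From Stdlib Require List.
(* [fintype] also exports a [lift]; make [lift] mean de Bruijn lifting again. *)
Import Defs.

Set Implicit Arguments.
Unset Strict Implicit.
Unset Printing Implicit Defensive.

Ltac case_ifs := repeat match goal with |- context [if ?b then _ else _] =>
  let E := fresh "E" in case E: b end.

(** * De Bruijn substitution algebra *)

Lemma lift0 t c : lift 0 c t = t.
Proof.
elim: t c => //= [n|t IH u IH2|a t IH|t IH u IH2|t IH|t IH] c; rewrite ?IH ?IH2 //.
by case_ifs; rewrite ?addn0.
Qed.

Lemma lift_lift_comm t d k c j : j <= c ->
  lift d (c + k) (lift k j t) = lift k j (lift d c t).
Proof.
elim: t d k c j => //= [n|t IH u IH2|a t IH|t IH u IH2|t IH|t IH] d k c j hj;
  rewrite ?IH ?IH2 //.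
- case_ifs => //=; case_ifs => //=; f_equal; lia.
- by rewrite -addSn IH.
Qed.

Lemma lift_lift_fuse t c j k i : i <= j -> j <= i + k ->
  lift c j (lift k i t) = lift (c + k) i t.
Proof.
elim: t c j k i => //= [n|t IH u IH2|a t IH|t IH u IH2|t IH|t IH] c j k i h1 h2;
  rewrite ?IH ?IH2 //.
case_ifs => //=; case_ifs => //=; f_equal; lia.
Qed.

Lemma subst_lift_comm t c k u j : j <= k ->
  subst (c + k) u (lift c j t) = lift c j (subst k u t).
Proof.
elim: t c k u j => //= [n|t IH u IH2|a t IH|t IH u IH2|t IH|t IH] c k v j hj;
  rewrite ?IH ?IH2 //.
- case_ifs => //=; case_ifs => //=; try (f_equal; lia).
  rewrite lift_lift_fuse; [f_equal; lia | lia | lia].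
- by rewrite -addnS IH.
Qed.

Lemma subst_lift_cancel t c w d j : j <= c -> c <= j + d ->
  subst c w (lift d.+1 j t) = lift d j t.
Proof.
elim: t c w d j => //= [n|t IH u IH2|a t IH|t IH u IH2|t IH|t IH] c w d j h1 h2;
  rewrite ?IH ?IH2 //.
case_ifs => //=; case_ifs => //=; f_equal; lia.
Qed.

Lemma lift_subst_comm t d k c u :
  lift d (k + c) (subst k u t) = subst k (lift d c u) (lift d (k + c).+1 t).
Proof.
elim: t d k c u => //= [n|t IH u IH2|a t IH|t IH u IH2|t IH|t IH] d k c v;
  rewrite ?IH ?IH2 //.
- case_ifs => //=; case_ifs => //=; try (f_equal; lia).
  by rewrite (addnC k c) lift_lift_comm.
- by rewrite -addSn IH.
Qed.

Lemma subst_subst_comm t c k u v :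
  subst (c + k) u (subst c v t) = subst c (subst k u v) (subst (c + k).+1 u t).
Proof.
elim: t c k u v => //= [n|t IH t2 IH2|a t IH|t IH t2 IH2|t IH|t IH] c k u v;
  rewrite ?IH ?IH2 //.
- case_ifs => //=; case_ifs => //=; try (f_equal; lia).
  + by rewrite subst_lift_comm.
  + by rewrite subst_lift_cancel //; lia.
- by rewrite -addSn IH.
Qed.

Lemma lift_num d c k : lift d c (num k) = num k.
Proof. by elim: k => //= k ->. Qed.

Lemma subst_num j u k : subst j u (num k) = num k.
Proof. by elim: k => //= k ->. Qed.

(** * Confluence *)

Definition atomic (t : term) : bool :=
  match t with App _ _ | Lam _ _ | Pair _ _ | Pi0 _ | Pi1 _ => false | _ => true end.

Inductive par : term -> term -> Prop :=
| p_atom t : atomic t -> par t t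
| p_app t t' u u' : par t t' -> par u u' -> par (App t u) (App t' u')
| p_lam a t t' : par t t' -> par (Lam a t) (Lam a t')
| p_pair t t' u u' : par t t' -> par u u' -> par (Pair t u) (Pair t' u')
| p_pi0 t t' : par t t' -> par (Pi0 t) (Pi0 t')
| p_pi1 t t' : par t t' -> par (Pi1 t) (Pi1 t')
| p_beta a t t' u u' : par t t' -> par u u' -> par (App (Lam a t) u) (subst 0 u' t')
| p_pi0r t t' u : par t t' -> par (Pi0 (Pair t u)) t'
| p_pi1r t u u' : par u u' -> par (Pi1 (Pair t u)) u'
| p_ift a t t' u : par t t' -> par (App (App (App (IfC a) TrueC) t) u) t'
| p_iff a t u u' : par u u' -> par (App (App (App (IfC a) FalseC) t) u) u'
| p_rec0 a t t' f : par t t' -> par (App (App (App (RecC a) t) f) Zero) t'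
| p_recS a t t' f f' n n' : par t t' -> par f f' -> par n n' ->
    par (App (App (App (RecC a) t) f) (App Succ n))
        (App (App f' n') (App (App (App (RecC a) t') f') n'))
| p_min U : par (App MinC (UpdC U)) (num (umin (sval U)))
| p_get U a n d :
    par (App (App (App (App GetC (UpdC U)) (num a)) (num n)) (num d))
        (num (uget (sval U) a n d))
| p_mkupd a n m V : sval V = [fset ((a, n), m)]%fset ->
    par (App (App (App MkupdC (num a)) (num n)) (num m)) (UpdC V)
| p_cup U1 U2 V : sval V = ucup (sval U1) (sval U2) ->
    par (App (App CupC (UpdC U1)) (UpdC U2)) (UpdC V).

Lemma par_refl t : par t t.
Proof. by elim: t => *; first [by apply: p_atom | constructor]. Qed.

Lemma red1_par t t' : red1 t t' -> par t t'.
Proof.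
elim=> *; first
  [ by apply: p_beta; apply: par_refl | by apply: p_pi0r; apply: par_refl
  | by apply: p_pi1r; apply: par_refl | by apply: p_ift; apply: par_refl
  | by apply: p_iff; apply: par_refl | by apply: p_rec0; apply: par_refl
  | by apply: p_recS; apply: par_refl
  | by apply: p_min | by apply: p_get | by apply: p_mkupd | by apply: p_cup
  | by apply: p_app => //; apply: par_refl | by apply: p_lam
  | by apply: p_pair => //; apply: par_refl | by apply: p_pi0 | by apply: p_pi1 ].
Qed.

Lemma reds_trans t1 t2 t3 : reds t1 t2 -> reds t2 t3 -> reds t1 t3.
Proof. by elim=> // a b c H _ IH /IH; apply: reds_step. Qed.

Lemma red1_reds t t' : red1 t t' -> reds t t'.
Proof. by move=> H; apply: reds_step H (reds_refl _). Qed.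

Lemma reds_ctx (f : term -> term) :
  (forall a b, red1 a b -> red1 (f a) (f b)) ->
  forall a b, reds a b -> reds (f a) (f b).
Proof.
move=> Hf a b; elim=> [t|x y z H _ IH]; first exact: reds_refl.
exact: reds_step (Hf _ _ H) IH.
Qed.

Lemma reds_app t t' u u' : reds t t' -> reds u u' -> reds (App t u) (App t' u').
Proof.
move=> H1 H2; apply: (@reds_trans _ (App t' u)).
- exact: (@reds_ctx (App^~ u) (fun a b H => r_appl u H) _ _ H1).
- exact: (@reds_ctx (App t') (fun a b H => r_appr t' H) _ _ H2).
Qed.

Lemma reds_pair t t' u u' : reds t t' -> reds u u' -> reds (Pair t u) (Pair t' u').
Proof.
move=> H1 H2; apply: (@reds_trans _ (Pair t' u)).
- exact: (@reds_ctx (Pair^~ u) (fun a b H => r_pairl u H) _ _ H1).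
- exact: (@reds_ctx (Pair t') (fun a b H => r_pairr t' H) _ _ H2).
Qed.

Lemma reds_lam a t t' : reds t t' -> reds (Lam a t) (Lam a t').
Proof. exact: (@reds_ctx (Lam a) (fun a' b H => r_lam a H)). Qed.

Lemma reds_pi0 t t' : reds t t' -> reds (Pi0 t) (Pi0 t').
Proof. exact: (@reds_ctx Pi0 (fun a' b H => r_pi0c H)). Qed.

Lemma reds_pi1 t t' : reds t t' -> reds (Pi1 t) (Pi1 t').
Proof. exact: (@reds_ctx Pi1 (fun a' b H => r_pi1c H)). Qed.

Lemma reds_step_r t t' t'' : reds t t' -> red1 t' t'' -> reds t t''.
Proof. by move=> H1 H2; apply: reds_trans H1 (red1_reds H2). Qed.

Lemma par_reds t t' : par t t' -> reds t t'.
Proof.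
elim=> {t t'} *; try exact: reds_refl.
- exact: reds_app.
- exact: reds_lam.
- exact: reds_pair.
- exact: reds_pi0.
- exact: reds_pi1.
- by apply: reds_step_r (r_beta _ _ _); apply: reds_app => //; apply: reds_lam.
- exact: reds_step (r_pi0 _ _) _.
- exact: reds_step (r_pi1 _ _) _.
- exact: reds_step (r_ift _ _ _) _.
- exact: reds_step (r_iff _ _ _) _.
- exact: reds_step (r_rec0 _ _ _) _.
- apply: reds_step (r_recS _ _ _ _) _.
  by do 2!apply: reds_app => //; do 2?apply: reds_app => //; apply: reds_refl.
- exact: red1_reds (r_min _).
- exact: red1_reds (r_get _ _ _ _).
- exact/red1_reds/r_mkupd.
- exact/red1_reds/r_cup.
Qed.

Lemma par_lift t t' : par t t' -> forall d c, par (lift d c t) (lift d c t').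
Proof.
elim=> {t t'} /=; try by move=> *; rewrite ?lift_num; constructor; auto.
- by move=> t At d c; apply: p_atom; case: t At => //= n _; case_ifs.
- move=> a t t' u u' _ IH1 _ IH2 d c.
  by rewrite -[c]add0n lift_subst_comm; apply: p_beta.
Qed.

Lemma par_subst t t' : par t t' -> forall u u' k, par u u' ->
  par (subst k u t) (subst k u' t').
Proof.
elim=> {t t'} /=; try by move=> *; rewrite ?subst_num; constructor; auto.
- move=> t At u u' k Hu; case: t At => //= *; try exact: p_atom.
  by case_ifs; [apply: p_atom | apply: par_lift | apply: p_atom].
- move=> a t t' v v' _ IH1 _ IH2 u u' k Hu.
  by rewrite -[k]add0n subst_subst_comm; apply: p_beta; auto.
Qed.

Fixpoint num_of (t : term) : option nat :=
  match t with Zero => Some 0 | App Succ t' => omap S (num_of t') | _ => None end.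

Lemma num_ofK t k : num_of t = Some k -> t = num k.
Proof.
elim: t k => //= [t1 _ t2 IH|] k; last by case=> <-.
case: t1 => //; case E: (num_of t2) => [k'|] //= [<-].
by rewrite (IH _ E).
Qed.

Lemma num_of_num k : num_of (num k) = Some k.
Proof. by elim: k => //= k ->. Qed.

Definition upd_of (X : {fset triple}) : option update := insub X.

Lemma upd_ofP X V : upd_of X = Some V -> sval V = X.
Proof. by rewrite /upd_of; case: insubP => [V0 _ HV|] // [<-]. Qed.

Lemma upd_of_val X V : sval V = X -> upd_of X = Some V.
Proof. by move=> <-; rewrite /upd_of valK. Qed.

(* Takahashi's complete development: contract every redex of [App t1 u],
   given the developments [ct] of [t1] and [cu] of [u]. *)
Definition develop_app (t1 u ct cu : term) : term :=
  let dflt := App ct cu in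
  match t1 with
  | Lam _ _ => match ct with Lam _ b' => subst 0 cu b' | _ => dflt end
  | MinC => match u with UpdC U => num (umin (sval U)) | _ => dflt end
  | App t2 y =>
    match t2 with
    | CupC => match y, u with
              | UpdC U1, UpdC U2 =>
                  match upd_of (ucup (sval U1) (sval U2)) with
                  | Some V => UpdC V | None => dflt end
              | _, _ => dflt end
    | App t3 x =>
      match t3 with
      | IfC _ => match x with
                 | TrueC => match ct with App _ y' => y' | _ => dflt end
                 | FalseC => cu
                 | _ => dflt end
      | RecC a => match u with
                  | Zero => match ct with App (App _ x') _ => x' | _ => dflt end
                  | App Succ _ =>
                      match ct, cu with
                      | App (App _ x') y', App _ n' =>
                          App (App y' n') (App (App (App (RecC a) x') y') n')
                      | _, _ => dflt end
                  | _ => dflt end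
      | MkupdC => match num_of x, num_of y, num_of u with
                  | Some a, Some n, Some m =>
                      match upd_of [fset ((a, n), m)]%fset with
                      | Some V => UpdC V | None => dflt end
                  | _, _, _ => dflt end
      | App GetC (UpdC U) => match num_of x, num_of y, num_of u with
                  | Some a, Some n, Some d => num (uget (sval U) a n d)
                  | _, _, _ => dflt end
      | _ => dflt
      end
    | _ => dflt
    end
  | _ => dflt
  end.

Fixpoint develop (t : term) : term :=
  match t with
  | App t1 u => develop_app t1 u (develop t1) (develop u)
  | Lam a b => Lam a (develop b)
  | Pair a b => Pair (develop a) (develop b)
  | Pi0 t1 => match t1 with Pair a _ => develop a | _ => Pi0 (develop t1) end
  | Pi1 t1 => match t1 with Pair _ b => develop b | _ => Pi1 (develop t1) end
  | _ => t
  end.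

Variant develop_app_spec (t u : term) : term -> Prop :=
| DevApp : develop_app_spec t u (App (develop t) (develop u))
| DevBeta a b : t = Lam a b -> develop_app_spec t u (subst 0 (develop u) (develop b))
| DevMin U : t = MinC -> u = UpdC U -> develop_app_spec t u (num (umin (sval U)))
| DevCup U1 U2 V : t = App CupC (UpdC U1) -> u = UpdC U2 ->
    sval V = ucup (sval U1) (sval U2) -> develop_app_spec t u (UpdC V)
| DevIfT a y : t = App (App (IfC a) TrueC) y -> develop_app_spec t u (develop y)
| DevIfF a y : t = App (App (IfC a) FalseC) y -> develop_app_spec t u (develop u)
| DevRec0 a x y : t = App (App (RecC a) x) y -> u = Zero ->
    develop_app_spec t u (develop x)
| DevRecS a x y n : t = App (App (RecC a) x) y -> u = App Succ n ->
    develop_app_spec t u (App (App (develop y) (develop n))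
      (App (App (App (RecC a) (develop x)) (develop y)) (develop n)))
| DevMkupd a n m V : t = App (App MkupdC (num a)) (num n) -> u = num m ->
    sval V = [fset ((a, n), m)]%fset -> develop_app_spec t u (UpdC V)
| DevGet U a n d : t = App (App (App GetC (UpdC U)) (num a)) (num n) -> u = num d ->
    develop_app_spec t u (num (uget (sval U) a n d)).

Lemma developP t u : develop_app_spec t u (develop (App t u)).
Proof.
rewrite [develop (App _ _)]/=.
case: t => [n|t2 y|a b|p q|p|p|||||a|a|U|||||i]; try exact: DevApp.
- case: t2 => [n|t3 x|a b|p q|p|p|||||a|a|U|||||i]; try exact: DevApp.
  + case: t3 => [n|t4 w|a b|p q|p|p|||||a|a|U|||||i]; try exact: DevApp.
    * case: t4 => [n|t5 w'|a b|p q|p|p|||||a|a|U'|||||i]; try exact: DevApp.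
      case: w => [n|t5 w'|a b|p q|p|p|||||a|a|U|||||i]; try exact: DevApp.
      rewrite [develop_app _ _ _ _]/=.
      case Ex: (num_of x) => [ka|]; last exact: DevApp.
      case Ey: (num_of y) => [kn|]; last exact: DevApp.
      case Eu: (num_of u) => [kd|]; last exact: DevApp.
      rewrite (num_ofK Ex) (num_ofK Ey) (num_ofK Eu); exact: DevGet.
    * case: x => [n|t5 w'|a' b|p q|p|p|||||a'|a'|U|||||i]; try exact: DevApp.
      -- exact: DevIfT.
      -- exact: DevIfF.
    * case: u => [n|t5 w'|a' b|p q|p|p|||||a'|a'|U|||||i]; try exact: DevApp.
      -- case: t5 => [n|t6 w''|a' b|p q|p|p|||||a'|a'|U|||||i]; try exact: DevApp.
         exact: DevRecS.
      -- exact: DevRec0.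
    * rewrite [develop_app _ _ _ _]/=.
      case Ex: (num_of x) => [ka|]; last exact: DevApp.
      case Ey: (num_of y) => [kn|]; last exact: DevApp.
      case Eu: (num_of u) => [kd|]; last exact: DevApp.
      case EV: (upd_of _) => [V|]; last exact: DevApp.
      rewrite (num_ofK Ex) (num_ofK Ey) (num_ofK Eu).
      exact: DevMkupd (upd_ofP EV).
  + case: y => [n|t5 w'|a' b|p q|p|p|||||a'|a'|U1|||||i]; try exact: DevApp.
    case: u => [n|t5 w'|a' b|p q|p|p|||||a'|a'|U2|||||i]; try exact: DevApp.
    rewrite [develop_app _ _ _ _]/=.
    case EV: (upd_of _) => [V|]; last exact: DevApp.
    exact: DevCup (upd_ofP EV).
- exact: DevBeta.
- case: u => [n|t5 w'|a' b|p q|p|p|||||a'|a'|U|||||i]; try exact: DevApp.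
  exact: DevMin.
Qed.

Lemma par_atom_inv t X : atomic t -> par t X -> X = t.
Proof. by move=> At H; inversion H; subst => //; rewrite -H0 in At. Qed.

Lemma par_num_inv k X : par (num k) X -> X = num k.
Proof.
elim: k X => [|k IH] X /= H; inversion H; subst => //.
inversion H2; subst => //; by rewrite (IH _ H4).
Qed.

Lemma par_lam_inv a b X : par (Lam a b) X -> exists2 b', X = Lam a b' & par b b'.
Proof. by move=> H; inversion H; subst => //; exists t'. Qed.

Lemma par_pair_inv a b X : par (Pair a b) X ->
  exists a' b', [/\ X = Pair a' b', par a a' & par b b'].
Proof. by move=> H; inversion H; subst => //; exists t', u'. Qed.

Lemma par_app_inv t u X : par (App t u) X ->
  (exists t' u', [/\ X = App t' u', par t t' & par u u']) \/
  match t with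
  | Lam _ _ | MinC | App CupC _ => True
  | App (App (App GetC _) _) _ => True
  | App (App (IfC _) _) _ | App (App (RecC _) _) _ | App (App MkupdC _) _ => True
  | _ => False end.
Proof. by move=> H; inversion H; subst; try (by right); left; exists t', u'. Qed.

Lemma par_app_const_inv c u X : atomic c -> (if c is MinC then false else true) ->
  par (App c u) X -> exists2 u', X = App c u' & par u u'.
Proof.
move=> Ac nMin H; case: (par_app_inv H) => [[t' [u' [-> H1 H2]]]|]; last by case: c Ac nMin {H}.
by rewrite (par_atom_inv Ac H1); exists u'.
Qed.

Lemma par_if_inv a c y X : atomic c -> par (App (App (IfC a) c) y) X ->
  exists2 y', X = App (App (IfC a) c) y' & par y y'.
Proof.
move=> Ac H; case: (par_app_inv H) => [[t' [u' [-> H1 H2]]]|//].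
case: (par_app_const_inv _ _ H1) => // c' -> /(par_atom_inv Ac) ->.
by exists u'.
Qed.

Lemma par_rec_inv a x y X : par (App (App (RecC a) x) y) X ->
  exists x' y', [/\ X = App (App (RecC a) x') y', par x x' & par y y'].
Proof.
move=> H; case: (par_app_inv H) => [[t' [u' [-> H1 H2]]]|//].
case: (par_app_const_inv _ _ H1) => // x' -> Hx.
by exists x', u'.
Qed.

Lemma par_develop_app t t' u u' : par t t' -> par t' (develop t) ->
  par u u' -> par u' (develop u) -> par (App t' u') (develop (App t u)).
Proof.
move=> Ht IHt Hu IHu; case: (developP t u).
- exact: p_app.
- move=> a b Et; subst t; case: (par_lam_inv Ht) => b' Et' Hb; subst t'.
  by move: IHt => /= /par_lam_inv [b'' [<-] Hb']; apply: p_beta.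
- move=> U Et Eu; subst t u.
  by rewrite (par_atom_inv _ Ht) // (par_atom_inv _ Hu) //; apply: p_min.
- move=> U1 U2 V Et Eu HV; subst t u.
  case: (par_app_const_inv _ _ Ht) => // U1' -> /par_atom_inv -> //.
  by rewrite (par_atom_inv _ Hu) //; apply: p_cup.
- move=> a y Et; subst t; case: (par_if_inv _ Ht) => // y' Et' _; subst t'.
  by move: IHt => /= /par_if_inv [] // y'' [<-] H; apply: p_ift.
- move=> a y Et; subst t; case: (par_if_inv _ Ht) => // y' -> _.
  exact: p_iff.
- move=> a x y Et Eu; subst t u; case: (par_rec_inv Ht) => x' [y' [Et' _ _]]; subst t'.
  rewrite (par_atom_inv _ Hu) //.
  by move: IHt => /= /par_rec_inv [x'' [y'' [[<- <-] H1 H2]]]; apply: p_rec0.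
- move=> a x y n Et Eu; subst t u; case: (par_rec_inv Ht) => x' [y' [Et' _ _]]; subst t'.
  case: (par_app_const_inv _ _ Hu) => // n' Eu' _; subst u'.
  move: IHt => /= /par_rec_inv [x'' [y'' [[<- <-] H1 H2]]].
  by move: IHu => /= /par_app_const_inv [] // n'' [<-] H3; apply: p_recS.
- move=> a n m V Et Eu HV; subst t u.
  case: (par_app_inv Ht) => [[t1 [t2 [-> H1 H2]]]|//].
  case: (par_app_const_inv _ _ H1) => // t3 -> /par_num_inv ->.
  by rewrite (par_num_inv H2) (par_num_inv Hu); apply: p_mkupd.
- move=> U a n d Et Eu; subst t u.
  case: (par_app_inv Ht) => [[t1 [t2 [-> H1 H2]]]|//].
  case: (par_app_inv H1) => [[t3 [t4 [-> H3 H4]]]|//].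
  case: (par_app_const_inv _ _ H3) => // t5 -> /par_atom_inv -> //.
  by rewrite (par_num_inv H4) (par_num_inv H2) (par_num_inv Hu); apply: p_get.
Qed.

Lemma par_develop t t' : par t t' -> par t' (develop t).
Proof.
elim=> {t t'} /=.
- by move=> t At; case: t At => //= *; apply: p_atom.
- by move=> *; apply: par_develop_app.
- by move=> *; apply: p_lam.
- by move=> *; apply: p_pair.
- case=> /= [n|t u|a b|p q|p|p|||||a|a|U|||||i] t' Ht IH; try exact: p_pi0.
  case: (par_pair_inv Ht) => p' [q' [Et' _ _]]; subst t'.
  by case: (par_pair_inv IH) => p'' [q'' [[<- _] H _]]; apply: p_pi0r.
- case=> /= [n|t u|a b|p q|p|p|||||a|a|U|||||i] t' Ht IH; try exact: p_pi1.
  case: (par_pair_inv Ht) => p' [q' [Et' _ _]]; subst t'.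
  by case: (par_pair_inv IH) => p'' [q'' [[_ <-] _ H]]; apply: p_pi1r.
- by move=> *; apply: par_subst.
- by [].
- by [].
- by [].
- by [].
- by [].
- by move=> *; repeat (apply: p_app => //); apply: p_atom.
- by move=> U; apply: par_refl.
- by move=> *; rewrite !num_of_num; apply: par_refl.
- by move=> a n m V HV; rewrite !num_of_num (upd_of_val HV); apply: par_refl.
- by move=> U1 U2 V HV; rewrite (upd_of_val HV); apply: par_refl.
Qed.

Lemma par_strip t t1 t2 : par t t1 -> reds t t2 -> exists2 t3, reds t1 t3 & par t2 t3.
Proof.
move=> H1 H2; elim: H2 t1 H1 => [x|x y z Hxy _ IH] t1 H1.
  by exists t1 => //; apply: reds_refl.
case: (IH (develop x) (par_develop (red1_par Hxy))) => t3 H3 H4.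
by exists t3 => //; apply: reds_trans (par_reds (par_develop H1)) H3.
Qed.

Lemma confluence t t1 t2 : reds t t1 -> reds t t2 ->
  exists2 t3, reds t1 t3 & reds t2 t3.
Proof.
move=> H1; elim: H1 t2 => [x|x y z Hxy _ IH] t2 H2.
  by exists t2 => //; apply: reds_refl.
case: (par_strip (red1_par Hxy) H2) => t4 H3 H4.
case: (IH _ H3) => t3 H5 H6; exists t3 => //.
exact: reds_trans (par_reds H4) H6.
Qed.

Lemma reds_subst k v z A B : reds v z -> reds A B -> reds (subst k v A) (subst k z B).
Proof.
have par_step v' z' A' B' : par v' z' -> par A' B' -> reds (subst k v' A') (subst k z' B').
  by move=> Hv HA; apply/par_reds/par_subst.
move=> Hv HA; apply: (@reds_trans _ (subst k z A)).
- elim: Hv {HA} => [x|x y w Hxy _ IH]; first exact: reds_refl.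
  by apply: reds_trans IH; apply: par_step (red1_par Hxy) (par_refl _).
- elim: HA => [x|x y w Hxy _ IH]; first exact: reds_refl.
  by apply: reds_trans IH; apply: par_step (par_refl _) (red1_par Hxy).
Qed.

Lemma reds_substs vs zs A B : List.Forall2 reds vs zs -> reds A B ->
  reds (substs vs A) (substs zs B).
Proof.
move=> H; elim: H A B => //= v z vs' zs' Hvz _ IH A B HAB.
exact/IH/reds_subst.
Qed.

Definition joinable X Y := exists2 Z, reds X Z & reds Y Z.

Lemma joinable_refl X : joinable X X.
Proof. by exists X; apply: reds_refl. Qed.

Lemma joinable_sym X Y : joinable X Y -> joinable Y X.
Proof. by case=> Z H1 H2; exists Z. Qed.

Lemma joinable_app X Y u : joinable X Y -> joinable (App X u) (App Y u).
Proof. by case=> Z H1 H2; exists (App Z u); apply: reds_app => //; apply: reds_refl. Qed.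

Lemma joinable_pi0 X Y : joinable X Y -> joinable (Pi0 X) (Pi0 Y).
Proof. by case=> Z H1 H2; exists (Pi0 Z); apply: reds_pi0. Qed.

Lemma joinable_pi1 X Y : joinable X Y -> joinable (Pi1 X) (Pi1 Y).
Proof. by case=> Z H1 H2; exists (Pi1 Z); apply: reds_pi1. Qed.

Lemma reds_normal N X : normal N -> reds N X -> X = N.
Proof. by move=> HN H; inversion H; subst => //; case: (HN t'). Qed.

Lemma reds_to_normal X N Z : normal N -> reds X N -> reds X Z -> reds Z N.
Proof.
move=> HN H1 H2; case: (confluence H1 H2) => t3 H3 H4.
by rewrite (reds_normal HN H3) in H4.
Qed.

Lemma joinable_reds_normal X Y N : joinable X Y -> reds X N -> normal N -> reds Y N.
Proof.
case=> Z H1 H2 H HN; apply: reds_trans H2 _.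
exact: reds_to_normal H H1.
Qed.

Lemma joinable_teq X Y W : joinable X Y -> teq X W -> teq Y W.
Proof.
move=> HJ [n [H1 [H2 H3]]]; exists n; split => //.
exact: joinable_reds_normal HJ H1 H3.
Qed.

Lemma teq_joinable X Y : teq X Y -> joinable X Y.
Proof. by case=> n [H1 [H2 _]]; exists n. Qed.

Definition bterm (b : bool) : term := if b then TrueC else FalseC.

Lemma normal_bterm b : normal (bterm b).
Proof. by case: b => t H; inversion H. Qed.

Lemma teq_bterm X b : teq X (bterm b) <-> reds X (bterm b).
Proof.
split.
- case=> n [H1 [H2 H3]].
  by move: H1; rewrite (reds_normal (@normal_bterm b) H2).
- by move=> H; exists (bterm b); do !split => //; [apply: reds_refl | apply: normal_bterm].
Qed.

Fixpoint closed_at (k : nat) (t : term) : bool :=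
  match t with
  | Var n => n < k
  | App a b | Pair a b => closed_at k a && closed_at k b
  | Lam _ b => closed_at k.+1 b
  | Pi0 b | Pi1 b => closed_at k b
  | _ => true
  end.

Lemma closed_at_mono t k k' : k <= k' -> closed_at k t -> closed_at k' t.
Proof.
elim: t k k' => [n|t IH u IH2|a t IH|t IH u IH2|t IH|t IH|||||a|a|U|||||i] k k' h //=;
  first by move=> ?; lia.
all: try by case/andP => /IH -> // /IH2 ->.
all: exact: IH.
Qed.

Lemma typed_closed_at G t T : has_type G t T -> closed_at (size G) t.
Proof. by elim=> //= *; apply/andP. Qed.

Lemma lift_closed_at t c d : closed_at c t -> lift d c t = t.
Proof.
elim: t c => [n|t IH u IH2|a t IH|t IH u IH2|t IH|t IH|||||a|a|U|||||i] c //=.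
- by move=> H; case_ifs => //; lia.
- by case/andP => /IH -> /IH2 ->.
- by move/IH ->.
- by case/andP => /IH -> /IH2 ->.
- by move/IH ->.
- by move/IH ->.
Qed.

Lemma subst_closed_at t k u : closed_at k t -> subst k u t = t.
Proof.
elim: t k => [n|t IH v IH2|a t IH|t IH v IH2|t IH|t IH|||||a|a|U|||||i] k //=.
- by move=> H; case_ifs => //; lia.
- by case/andP => /IH -> /IH2 ->.
- by move/IH ->.
- by case/andP => /IH -> /IH2 ->.
- by move/IH ->.
- by move/IH ->.
Qed.

Lemma lift_closed t c d : closed_at 0 t -> lift d c t = t.
Proof. by move=> H; apply/lift_closed_at/(closed_at_mono _ H). Qed.

Lemma subst_closed t k u : closed_at 0 t -> subst k u t = t.
Proof. by move=> H; apply/subst_closed_at/(closed_at_mono _ H). Qed.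

Lemma substs_closed ws t : closed_at 0 t -> substs ws t = t.
Proof. by elim: ws t => //= w ws IH t H; rewrite subst_closed // IH. Qed.

Lemma substs_App ws a b : substs ws (App a b) = App (substs ws a) (substs ws b).
Proof. by elim: ws a b => //= w ws IH a b; rewrite IH. Qed.

Lemma subst_closed_comm P c j v w : closed_at 0 v -> closed_at 0 w ->
  subst c v (subst (c + j).+1 w P) = subst (c + j) w (subst c v P).
Proof.
move=> Hv Hw; elim: P c => //= [n|t IH t2 IH2|a t IH|t IH t2 IH2|t IH|t IH] c;
  rewrite ?IH ?IH2 //.
case_ifs => //=; case_ifs => //=; try (f_equal; lia);
  by rewrite ?lift_closed // ?subst_closed.
Qed.

Lemma substs_insert wa wb w P : all (closed_at 0) wa -> closed_at 0 w ->
  substs (wa ++ wb) (subst (size wa) w P) = substs (wa ++ w :: wb) P.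
Proof.
elim: wa P => //= v wa IH P /andP [Hv Hwa] Hw.
by rewrite -[size wa]add0n subst_closed_comm // add0n IH.
Qed.

Lemma substs_subst ws w P j : j <= size ws -> all (closed_at 0) ws -> closed_at 0 w ->
  substs ws (subst j w P) = substs (take j ws ++ w :: drop j ws) P.
Proof.
move=> hj Hws Hw.
rewrite -(cat_take_drop j ws) all_cat in Hws; case/andP: Hws => Htake _.
by rewrite -substs_insert // (size_takel hj) cat_take_drop.
Qed.

Lemma Forall2_take (A B : Type) (R : A -> B -> Prop) n l1 l2 :
  List.Forall2 R l1 l2 -> List.Forall2 R (take n l1) (take n l2).
Proof. by move=> H; elim: H n => [|a b l1' l2' Hab _ IH] [|n] //=; constructor. Qed.

Lemma Forall2_drop (A B : Type) (R : A -> B -> Prop) n l1 l2 :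
  List.Forall2 R l1 l2 -> List.Forall2 R (drop n l1) (drop n l2).
Proof. by move=> H; elim: H n => [|a b l1' l2' Hab H' IH] [|n] //=; constructor. Qed.

Section StateInstantiation.
Variable s : term.
Hypothesis closed_s : closed_at 0 s.

Lemma tsub_lift d c t : tsub s (lift d c t) = lift d c (tsub s t).
Proof.
elim: t c => //= [n|t IH u IH2|a t IH|t IH u IH2|t IH|t IH|i] c; rewrite ?IH ?IH2 //.
- by case_ifs.
- by rewrite lift_closed // lift_num.
Qed.

Lemma tsub_subst k u t : tsub s (subst k u t) = subst k (tsub s u) (tsub s t).
Proof.
elim: t k => //= [n|t IH v IH2|a t IH|t IH v IH2|t IH|t IH|i] k; rewrite ?IH ?IH2 //.
- by case_ifs => //; rewrite tsub_lift.
- by rewrite subst_closed // subst_num.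
Qed.

Lemma tsub_substs ws t : tsub s (substs ws t) = substs (map (tsub s) ws) (tsub s t).
Proof. by elim: ws t => //= w ws IH t; rewrite IH tsub_subst. Qed.

End StateInstantiation.

(** * Boolean values and involutive negation *)

Notation IfT a c y z := (App (App (App (IfC a) c) y) z).

Lemma notB_normal : normal notB.
Proof.
move=> t' H; rewrite /notB in H.
by repeat match goal with H : red1 _ _ |- _ => inversion H; clear H; subst end.
Qed.

Lemma reds_if_inv X W : reds X W -> forall a c y z, X = IfT a c y z ->
  [\/ exists c' y' z', W = IfT a c' y' z',
      reds c TrueC /\ reds y W
    | reds c FalseC /\ reds z W].
Proof.
elim=> [x|x x' w Hx Hw IH] a c y z EX; subst.
  by apply: Or31; exists c, y, z.
inversion Hx; subst.
- by apply: Or32; split; first exact: reds_refl.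
- by apply: Or33; split; first exact: reds_refl.
all: try (match goal with H : red1 (App (App (IfC _) _) _) _ |- _ => inversion H; subst end).
all: try (match goal with H : red1 (App (IfC _) _) _ |- _ => inversion H; subst end).
all: try (match goal with H : red1 (IfC _) _ |- _ => inversion H end).
all: case: (IH _ _ _ _ erefl) => [?|[H5 H6]|[H5 H6]];
  [exact: Or31 | apply: Or32 | apply: Or33]; split => //; by eapply reds_step; eassumption.
Qed.

Lemma reds_notB_inv X W : reds X W -> forall Y, X = App notB Y ->
  (exists2 Y', W = App notB Y' & reds Y Y') \/
  (exists2 Y', reds Y Y' & reds (IfT TBool Y' FalseC TrueC) W).
Proof.
elim=> [x|x x' w Hx Hw IH] Y EX; subst.
  by left; exists Y => //; apply: reds_refl.
inversion Hx; subst.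
- by right; exists Y; [apply: reds_refl | move: Hw; rewrite /= lift0].
- by case: (notB_normal H2).
- case: (IH _ erefl) => [[Y0 -> HY]|[Y0 HY1 HY2]].
  + by left; exists Y0 => //; apply: reds_step HY.
  + by right; exists Y0 => //; apply: reds_step HY1.
Qed.

Lemma reds_notB Y b : reds (App notB Y) (bterm b) <-> reds Y (bterm (~~ b)).
Proof.
split.
- case/reds_notB_inv/(_ Y erefl) => [[Y' E _]|[Y' H1 H2]]; first by destruct b.
  case: (reds_if_inv H2 erefl) => [[c' [y' [z' E]]]|[H3 H4]|[H3 H4]];
    first by destruct b.
  + move/(reds_normal (@normal_bterm false)): H4 => E.
    by destruct b => //; apply: reds_trans H1 H3.
  + move/(reds_normal (@normal_bterm true)): H4 => E.
    by destruct b => //; apply: reds_trans H1 H3.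
- move=> H; apply: reds_step; first exact: r_beta.
  rewrite /= lift0; apply: (@reds_trans _ (IfT TBool (bterm (~~ b)) FalseC TrueC)).
    by do 2![apply: reds_app; last exact: reds_refl]; apply: reds_app (reds_refl _) H.
  by case: b {H}; apply: red1_reds; [apply: r_iff | apply: r_ift].
Qed.

Lemma negs_notB P n : negs P = n.+1 -> exists Q, P = App notB Q.
Proof.
destruct P; try discriminate; simpl;
  repeat match goal with |- context [match ?x with _ => _ end] => destruct x; try discriminate end.
by move=> _; eexists.
Qed.

Lemma perp_atomP P :
  perp_atom P = App notB P \/ exists2 Q, P = App notB Q & perp_atom P = Q.
Proof.
rewrite /perp_atom; case: ifP => Ho; [right | by left].
case E: (negs P) Ho => [|n] //= _; case: (negs_notB E) => Q EP; subst P.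
by exists Q.
Qed.

Lemma reds_perp_atom s ws P b :
  reds (tsub s (substs ws (perp_atom P))) (bterm b) <->
  reds (tsub s (substs ws P)) (bterm (~~ b)).
Proof.
case: (perp_atomP P) => [->|[Q -> ->]];
  by rewrite substs_App (substs_closed _ (erefl : closed_at 0 notB)) /= reds_notB ?negbK.
Qed.

(** * Formulas with equivalent atoms *)

Section Equivalence.
Variable s : term.
Hypothesis closed_s : closed_at 0 s.

Definition value_equiv (a b : term) : Prop :=
  [/\ closed_at 0 a, closed_at 0 b & joinable (tsub s a) (tsub s b)].

Definition bool_equiv (P1 P2 : term) : Prop :=
  forall b, reds (tsub s P1) (bterm b) <-> reds (tsub s P2) (bterm b).

Definition atom_equiv (k : nat) (P1 P2 : term) : Prop :=
  forall ws1 ws2, size ws1 = k -> List.Forall2 value_equiv ws1 ws2 ->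
  bool_equiv (substs ws1 P1) (substs ws2 P2).

Lemma value_equiv_typed u a : has_type [::] u a -> value_equiv u u.
Proof. by move/typed_closed_at=> Hu; split => //; apply: joinable_refl. Qed.

Lemma value_equiv_closed ws1 ws2 : List.Forall2 value_equiv ws1 ws2 ->
  all (closed_at 0) ws1 /\ all (closed_at 0) ws2.
Proof. by elim=> //= a b l1 l2 [-> -> _] _ [-> ->]. Qed.

Lemma value_equiv_common_reducts ws1 ws2 : List.Forall2 value_equiv ws1 ws2 ->
  exists2 zs, List.Forall2 reds (map (tsub s) ws1) zs
            & List.Forall2 reds (map (tsub s) ws2) zs.
Proof.
elim=> [|a b l1 l2 [_ _ [z Ha Hb]] _ [zs H1 H2]]; first by exists [::].
by exists (z :: zs); constructor.
Qed.

Lemma atom_equiv_refl k P : atom_equiv k P P.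
Proof.
move=> ws1 ws2 _ /value_equiv_common_reducts [zs H1 H2] b.
rewrite !tsub_substs //.
have E1 := reds_substs H1 (reds_refl (tsub s P)).
have E2 := reds_substs H2 (reds_refl (tsub s P)).
by split=> H; [apply: reds_trans E2 _ | apply: reds_trans E1 _];
  apply: reds_to_normal (@normal_bterm b) H _.
Qed.

Lemma atom_equiv_subst m P1 P2 j w1 w2 : atom_equiv m.+1 P1 P2 -> j <= m ->
  value_equiv w1 w2 -> atom_equiv m (subst j w1 P1) (subst j w2 P2).
Proof.
move=> HP hj Hw ws1 ws2 Hsz H.
have [Hw1 Hw2 _] := Hw; have [Hc1 Hc2] := value_equiv_closed H.
have Hsz2 : size ws2 = m by rewrite -Hsz; apply/esym/(List.Forall2_length H).
rewrite !substs_subst ?Hsz ?Hsz2 //; apply: HP.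
- by rewrite size_cat /= size_drop size_takel Hsz // addnS subnKC.
- apply: List.Forall2_app; first exact: Forall2_take.
  by constructor => //; apply: Forall2_drop.
Qed.

Lemma atom_equiv_perp k P1 P2 :
  atom_equiv k P1 P2 -> atom_equiv k (perp_atom P1) (perp_atom P2).
Proof. by move=> HP ws1 ws2 Hsz H b; rewrite !reds_perp_atom; apply: HP. Qed.

Inductive fequiv : nat -> formula -> formula -> Prop :=
| FEqAtom k P1 P2 : atom_equiv k P1 P2 -> fequiv k (FAtom P1) (FAtom P2)
| FEqAnd k A1 A2 B1 B2 :
    fequiv k A1 A2 -> fequiv k B1 B2 -> fequiv k (FAnd A1 B1) (FAnd A2 B2)
| FEqOr k A1 A2 B1 B2 :
    fequiv k A1 A2 -> fequiv k B1 B2 -> fequiv k (FOr A1 B1) (FOr A2 B2)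
| FEqImp k A1 A2 B1 B2 :
    fequiv k A1 A2 -> fequiv k B1 B2 -> fequiv k (FImp A1 B1) (FImp A2 B2)
| FEqCoimp k A1 A2 B1 B2 :
    fequiv k A1 A2 -> fequiv k B1 B2 -> fequiv k (FCoimp A1 B1) (FCoimp A2 B2)
| FEqAll k a A1 A2 : fequiv k.+1 A1 A2 -> fequiv k (FAll a A1) (FAll a A2)
| FEqEx k a A1 A2 : fequiv k.+1 A1 A2 -> fequiv k (FEx a A1) (FEx a A2).

Lemma fequiv_refl k F : fequiv k F F.
Proof. by elim: F k => *; constructor; auto; apply: atom_equiv_refl. Qed.

Lemma fequiv_fsubst k F1 F2 j w1 w2 : fequiv k.+1 F1 F2 -> j <= k ->
  value_equiv w1 w2 -> fequiv k (fsubst j w1 F1) (fsubst j w2 F2).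
Proof.
move Ek : k.+1 => n HF; elim: HF k j Ek => {n F1 F2} /=;
  try by move=> n A1 A2 B1 B2 _ IHA _ IHB k j Ek hj Hw; constructor; auto.
- by move=> n P1 P2 HP k j Ek hj Hw; subst n; constructor; apply: atom_equiv_subst.
- by move=> n a A1 A2 _ IH k j Ek hj Hw; constructor; apply: (IH _ _ (congr1 S Ek)).
- by move=> n a A1 A2 _ IH k j Ek hj Hw; constructor; apply: (IH _ _ (congr1 S Ek)).
Qed.

Lemma fequiv_perp k F1 F2 : fequiv k F1 F2 -> fequiv k (perp F1) (perp F2).
Proof. by elim=> /= *; constructor; auto; apply: atom_equiv_perp. Qed.

Lemma fequiv_inv k F1 F2 : fequiv k F1 F2 ->
  match F1, F2 with
  | FAtom P1, FAtom P2 => atom_equiv k P1 P2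
  | FAnd A1 B1, FAnd A2 B2 | FOr A1 B1, FOr A2 B2
  | FImp A1 B1, FImp A2 B2 | FCoimp A1 B1, FCoimp A2 B2 => fequiv k A1 A2 /\ fequiv k B1 B2
  | FAll a1 A1, FAll a2 A2 | FEx a1 A1, FEx a2 A2 => a1 = a2 /\ fequiv k.+1 A1 A2
  | _, _ => False
  end.
Proof. by case. Qed.

Lemma fsize_fequiv k F1 F2 : fequiv k F1 F2 -> fsize F1 = fsize F2.
Proof. by elim=> //= *; congruence. Qed.

Lemma fsize_fsubst k u F : fsize (fsubst k u F) = fsize F.
Proof. by elim: F k => //= *; congruence. Qed.

Lemma rtype_f_fequiv n k F1 F2 : fequiv k F1 F2 -> rtype_f n F1 = rtype_f n F2.
Proof.
elim: n k F1 F2 => [|n IH] k F1 F2 HF //=.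
case: HF => {k F1 F2} [j|j A1 A2 B1 B2 HA HB|j A1 A2 B1 B2 HA HB|j A1 A2 B1 B2 HA HB
  |j A1 A2 B1 B2 HA HB|j a A1 A2 HA|j a A1 A2 HA] //=;
  by rewrite ?(IH _ _ _ HA) ?(IH _ _ _ HB) ?(IH _ _ _ (fequiv_perp HB)).
Qed.

Lemma rtype_fequiv k F1 F2 : fequiv k F1 F2 -> rtype F1 = rtype F2.
Proof. by move=> HF; rewrite /rtype (fsize_fequiv HF); apply: rtype_f_fequiv HF. Qed.

End Equivalence.

(** * Invariance of realizability *)

Section Invariance.
Variables (sk : nat -> formula -> nat) (code : nat -> term) (Gam : seq (nat * formula)).
Variable s : term.

Local Notation real n := (real_f sk code Gam n s).

Definition real_invariant (n : nat) : Prop :=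
  forall F1 F2 t1 t2, fequiv s 0 F1 F2 -> joinable (tsub s t1) (tsub s t2) ->
  (real n t1 F1 <-> real n t2 F2).

Lemma real_atom_transfer n P1 P2 t1 t2 : bool_equiv s P1 P2 ->
  joinable (tsub s t1) (tsub s t2) -> real n.+1 t1 (FAtom P1) -> real n.+1 t2 (FAtom P2).
Proof.
move=> HP /joinable_sym HJ [Hupd Hempty]; split=> U /(joinable_teq HJ) HU.
- exact: Hupd.
- by move=> /(Hempty _ HU) /(teq_bterm _ true) /HP /(teq_bterm _ true).
Qed.

Lemma real_atom_invariant n P1 P2 t1 t2 : atom_equiv s 0 P1 P2 ->
  joinable (tsub s t1) (tsub s t2) -> (real n.+1 t1 (FAtom P1) <-> real n.+1 t2 (FAtom P2)).
Proof.
move=> HP HJ; have HP0 : bool_equiv s P1 P2 by apply: (HP [::] [::]).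
split; apply: real_atom_transfer => //; last exact: joinable_sym.
by move=> b; rewrite HP0.
Qed.

Lemma fequiv_instance a A1 A2 u : fequiv s 1 A1 A2 -> has_type [::] u a ->
  fequiv s 0 (fsubst 0 u A1) (fsubst 0 u A2).
Proof. by move=> HA /value_equiv_typed Hu; apply: fequiv_fsubst HA _ (Hu s). Qed.

Lemma real_invariantS n : real_invariant n -> real_invariant n.+1.
Proof.
move=> IH F1 F2 t1 t2 HF HJ.
have HJ0 : joinable (tsub s (Pi0 t1)) (tsub s (Pi0 t2)) := joinable_pi0 HJ.
have HJ1 : joinable (tsub s (Pi1 t1)) (tsub s (Pi1 t2)) := joinable_pi1 HJ.
have HJ10 : joinable (tsub s (Pi0 (Pi1 t1))) (tsub s (Pi0 (Pi1 t2))) := joinable_pi0 HJ1.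
have HJ11 : joinable (tsub s (Pi1 (Pi1 t1))) (tsub s (Pi1 (Pi1 t2))) := joinable_pi1 HJ1.
have HJapp u : joinable (tsub s (App t1 u)) (tsub s (App t2 u)) := joinable_app _ HJ.
move: (fequiv_inv HF) => {HF}.
case: F1 => [P1|A1 B1|A1 B1|A1 B1|A1 B1|a A1|a A1];
  case: F2 => [P2|A2 B2|A2 B2|A2 B2|A2 B2|a' A2|a' A2] //=.
- by move=> HP; apply: real_atom_invariant.
- by move=> [HA HB]; rewrite (IH _ _ _ _ HA HJ0) (IH _ _ _ _ HB HJ1).
- move=> [HA HB]; rewrite (IH _ _ _ _ HA HJ10) (IH _ _ _ _ HB HJ11).
  have HJ0' := joinable_sym HJ0.
  by split=> [[[/(joinable_teq HJ0) ? ?]|[/(joinable_teq HJ0) ? ?]]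
             |[[/(joinable_teq HJ0') ? ?]|[/(joinable_teq HJ0') ? ?]]]; tauto.
- move=> [HA HB]; rewrite (rtype_fequiv HA).
  split=> Hr u Hu /(IH _ _ u u HA (joinable_refl _)) Hau.
  + by rewrite -(IH _ _ _ _ HB (HJapp u)); apply: Hr.
  + by rewrite (IH _ _ _ _ HB (HJapp u)); apply: Hr.
- by move=> [HA /fequiv_perp HB]; rewrite (IH _ _ _ _ HA HJ0) (IH _ _ _ _ HB HJ1).
- move=> [<- HA]; split=> Hr u Hu Hi.
  + by rewrite -(IH _ _ _ _ (fequiv_instance HA Hu) (HJapp u)); apply: Hr.
  + by rewrite (IH _ _ _ _ (fequiv_instance HA Hu) (HJapp u)); apply: Hr.
- move=> [<- HA]; split=> [] [u [Hu [Hi [Ht Hr]]]]; exists u; do 3!split => //.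
  + exact: joinable_teq HJ0 Ht.
  + by rewrite -(IH _ _ _ _ (fequiv_instance HA Hu) HJ1).
  + exact: joinable_teq (joinable_sym HJ0) Ht.
  + by rewrite (IH _ _ _ _ (fequiv_instance HA Hu) HJ1).
Qed.

Lemma real_invariant_all n : real_invariant n.
Proof. by elim: n => [|n /real_invariantS //] F1 F2 t1 t2. Qed.

End Invariance.

Theorem mainTheorem2
  (sk : nat -> formula -> nat) (code : nat -> term) (Gam : seq (nat * formula))
  (Hsk : skolem_ok sk) (Hcode : code_ok code)
  (HGam : forall n A, List.In (n, A) Gam -> arith A /\ fwf (nseq n.+1 TN) A)
  (s : term) (Hs : is_state s)
  (a : ty) (B : formula) (HB : fwf [:: a] B)
  (t1 t2 u1 u2 : term)
  (Hu1 : has_type [::] u1 a) (Hu2 : has_type [::] u2 a)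
  (Ht1 : has_type [::] t1 (rtype (fsubst 0 u1 B)))
  (Ht2 : has_type [::] t2 (rtype (fsubst 0 u2 B))) :
  teq (tsub s t1) (tsub s t2) -> teq (tsub s u1) (tsub s u2) ->
  (realizes sk code Gam s t1 (fsubst 0 u1 B) <-> realizes sk code Gam s t2 (fsubst 0 u2 B)).
Proof.
move=> /teq_joinable Ht /teq_joinable Hu.
have closed_s : closed_at 0 s by case: Hs => /typed_closed_at.
have Hu12 : value_equiv s u1 u2.
  by split=> //; [apply: typed_closed_at Hu1 | apply: typed_closed_at Hu2].
have HB12 := fequiv_fsubst (fequiv_refl closed_s 1 B) (leqnn 0) Hu12.
rewrite /realizes !fsize_fsubst.
exact: (real_invariant_all sk code Gam (fsize B) HB12 Ht).
Qed.
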